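(* Let $\mathcal{E}$ be a finite-dimensional Euclidean space, $e\in\mathcal{E}$ nonzero, and let $C$ be a compact convex set contained in the hyperplane $H=\{x\in\mathcal{E}: \langle e,x\rangle=1\}$. If $C$ is amenable, then its conic hull $\mathcal{K}=\operatorname{cone}C=\{\lambda x: x\in C,\lambda\ge0\}$ is also amenable.
   Context: A face of a closed convex set $C$ is a closed convex subset $F\subseteq C$ such that whenever $x,y\in C$ and $\alpha x+(1-\alpha)y\in F$ for some $\alpha\in(0,1)$, then $x,y\in F$. A face $F$ of a closed convex set $C$ is amenable if for every bounded set $B$ there exists $\kappa>0$ such that $\operatorname{dist}(x,F)\le\kappa\operatorname{dist}(x,C)$ for all $x\in(\operatorname{aff}F)\cap B$; $C$ is amenable if all its faces are amenable. For a closed convex cone $\mathcal{K}$ this is equivalent to: for every face $\mathcal{F}$ there is $\kappa>0$ with $\operatorname{dist}(x,\mathcal{F})\le\kappa\operatorname{dist}(x,\mathcal{K})$ for all $x\in\operatorname{span}\mathcal{F}$. *)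

From HB Require Import structures.
From mathcomp Require Import all_boot all_order all_algebra.
From mathcomp Require Import all_classical all_reals all_analysis.
Set Implicit Arguments. Unset Strict Implicit. Unset Printing Implicit Defensive.
Import Order.TTheory GRing.Theory Num.Theory.
Import numFieldNormedType.Exports.
Local Open Scope classical_set_scope.
Local Open Scope ring_scope.

Definition dotv (R : realType) (n : nat) (x y : 'rV[R]_n) : R :=
  \sum_(i < n) x ord0 i * y ord0 i.

Definition enorm (R : realType) (n : nat) (x : 'rV[R]_n) : R :=
  Num.sqrt (dotv x x).

Definition dist (R : realType) (n : nat) (x : 'rV[R]_n) (S : set 'rV[R]_n) : R :=
  inf [set enorm (x - y) | y in S].

Definition convexS (R : realType) (n : nat) (S : set 'rV[R]_n) : Prop :=
  forall x y (t : R), S x -> S y -> 0 <= t -> t <= 1 -> S (t *: x + (1 - t) *: y).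

Definition bounded_set (R : realType) (n : nat) (B : set 'rV[R]_n) : Prop :=
  exists M : R, forall x, B x -> enorm x <= M.

Definition aff (R : realType) (n : nat) (S : set 'rV[R]_n) : set 'rV[R]_n :=
  [set x | exists (k : nat) (p : 'I_k -> 'rV[R]_n) (a : 'I_k -> R),
      (forall i, S (p i)) /\ \sum_(i < k) a i = 1 /\ x = \sum_(i < k) a i *: p i].

Definition is_face (R : realType) (n : nat) (C F : set 'rV[R]_n) : Prop :=
  closed F /\ convexS F /\ F `<=` C /\
  forall x y (a : R), C x -> C y -> 0 < a -> a < 1 ->
    F (a *: x + (1 - a) *: y) -> F x /\ F y.

Definition amenable_face (R : realType) (n : nat) (C F : set 'rV[R]_n) : Prop :=
  forall B : set 'rV[R]_n, bounded_set B ->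
    exists kappa : R, 0 < kappa /\
      forall x, aff F x -> B x -> dist x F <= kappa * dist x C.

Definition amenable (R : realType) (n : nat) (C : set 'rV[R]_n) : Prop :=
  forall F, is_face C F -> amenable_face C F.

Definition cone_hull (R : realType) (n : nat) (C : set 'rV[R]_n) : set 'rV[R]_n :=
  [set z | exists (l : R) (x : 'rV[R]_n), 0 <= l /\ C x /\ z = l *: x].

From HB Require Import structures.
From mathcomp Require Import all_boot all_order all_algebra.
From mathcomp Require Import all_classical all_reals all_analysis.
From mathcomp Require Import ring lra.
Set Implicit Arguments. Unset Strict Implicit. Unset Printing Implicit Defensive.
Import Order.TTheory GRing.Theory Num.Theory.
Import numFieldNormedType.Exports.
Local Open Scope classical_set_scope.
Local Open Scope ring_scope.

(* A face G of cone C is the cone over the face F = G ∩ C of C, on which <e,.> = 1.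
   Let x ∈ aff G and k = s c with c ∈ C, and let M bound the norms of points of C.
   If |x| <= 2|x - k| then, as 0 ∈ G, dist(x, G) <= |x| <= 2|x - k|.  Otherwise
   s >= |x| / 2M, and for any p ∈ F the point y = x/s + (1 - <e,x>/s) p lies in aff F
   and in a ball whose radius does not depend on x; moreover s y is within
   |e| M |x - k| of x, because s - <e,x> = <e, k - x>.  Amenability of F in C gives
   dist(y, F) <= kappa_F |y - c|, and since s F ⊆ G, scaling back by s bounds
   dist(x, G) by a fixed multiple of |x - k|.  The infimum over k then bounds it by
   dist(x, cone C), with a constant independent of the bounded set. *)

Lemma discriminant_le (F : realFieldType) (a b c : F) : 0 <= c ->
  (forall t, 0 <= a + 2 * b * t + c * t ^+ 2) -> b ^+ 2 <= a * c.
Proof.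
move=> c_ge0 quad_ge0; have [c_gt0|] := ltrP 0 c.
  have := quad_ge0 (- b / c).
  have -> : a + 2 * b * (- b / c) + c * (- b / c) ^+ 2 = (a * c - b ^+ 2) / c.
    by field; rewrite gt_eqF.
  by rewrite pmulr_lge0 ?invr_gt0 // subr_ge0.
move=> c_le0; have c0 : c = 0 by apply/eqP; rewrite eq_le c_le0.
rewrite c0 in quad_ge0 *; rewrite mulr0; have [->|b_neq0] := eqVneq b 0; first by rewrite expr0n.
have := quad_ge0 (- (a + 1) / (2 * b)).
have -> : a + 2 * b * (- (a + 1) / (2 * b)) + 0 * (- (a + 1) / (2 * b)) ^+ 2 = -1.
  by field.
by rewrite ler0N1.
Qed.

Section Euclidean.
Variables (R : realType) (n : nat).
Implicit Types (x y z : 'rV[R]_n) (S : set 'rV[R]_n).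

Lemma dotvC x y : dotv x y = dotv y x.
Proof. by apply: eq_bigr => i _; rewrite mulrC. Qed.

Lemma dotvDr x y z : dotv x (y + z) = dotv x y + dotv x z.
Proof. by rewrite /dotv -big_split; apply: eq_bigr => i _; rewrite mxE mulrDr. Qed.

Lemma dotvZr (a : R) x y : dotv x (a *: y) = a * dotv x y.
Proof. by rewrite /dotv mulr_sumr; apply: eq_bigr => i _; rewrite mxE mulrCA. Qed.

Lemma dotvBr x y z : dotv x (y - z) = dotv x y - dotv x z.
Proof. by rewrite dotvDr -scaleN1r dotvZr mulN1r. Qed.

Lemma dotv0r x : dotv x 0 = 0.
Proof. by rewrite -(scale0r 0) dotvZr mul0r. Qed.

Lemma dotv_sumr x k (F : 'I_k -> 'rV[R]_n) :
  dotv x (\sum_(i < k) F i) = \sum_(i < k) dotv x (F i).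
Proof. exact: (big_morph _ (dotvDr x) (dotv0r x)). Qed.

Lemma dotvv_ge0 x : 0 <= dotv x x.
Proof. by apply: sumr_ge0 => i _; rewrite -expr2 sqr_ge0. Qed.

Lemma dotv_sqr_le x y : dotv x y ^+ 2 <= dotv x x * dotv y y.
Proof.
apply: discriminant_le (dotvv_ge0 y) _ => t.
have -> : dotv x x + 2 * dotv x y * t + dotv y y * t ^+ 2 =
          dotv (x + t *: y) (x + t *: y).
  rewrite /dotv mulr_sumr !mulr_suml -!big_split /=.
  by apply: eq_bigr => i _; rewrite !mxE; ring.
exact: dotvv_ge0.
Qed.

Lemma enorm_ge0 x : 0 <= enorm x.
Proof. exact: sqrtr_ge0. Qed.

Lemma enorm_sqr x : enorm x ^+ 2 = dotv x x.
Proof. by rewrite sqr_sqrtr ?dotvv_ge0. Qed.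

Lemma dotv_le_enorm x y : `|dotv x y| <= enorm x * enorm y.
Proof.
rewrite -sqrtr_sqr /enorm -sqrtrM ?dotvv_ge0 //.
by apply: ler_wsqrtr; apply: dotv_sqr_le.
Qed.

Lemma enormZ (a : R) x : enorm (a *: x) = `|a| * enorm x.
Proof. by rewrite /enorm dotvZr dotvC dotvZr mulrA -expr2 sqrtrM ?sqr_ge0 // sqrtr_sqr. Qed.

Lemma enorm0 : enorm (0 : 'rV[R]_n) = 0.
Proof. by rewrite -(scale0r 0) enormZ normr0 mul0r. Qed.

Lemma enorm_distC x y : enorm (x - y) = enorm (y - x).
Proof. by rewrite -opprB -scaleN1r enormZ normrN1 mul1r. Qed.

Lemma enormD x y : enorm (x + y) <= enorm x + enorm y.
Proof.
rewrite -(ger0_norm (addr_ge0 (enorm_ge0 x) (enorm_ge0 y))) -sqrtr_sqr.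
apply: ler_wsqrtr; rewrite sqrrD !enorm_sqr dotvDr !(dotvC (x + y)) !dotvDr (dotvC y x).
have := ler_norm (dotv x y); have := dotv_le_enorm x y; lra.
Qed.

Lemma enorm_le_mx_norm x : enorm x <= Num.sqrt n%:R * `|x|.
Proof.
rewrite -[`|x|]ger0_norm // -sqrtr_sqr -sqrtrM ?ler0n //; apply: ler_wsqrtr.
rewrite -[n in n%:R]card_ord -sumr_const mulr_suml; apply: ler_sum => i _.
rewrite mul1r -expr2 -(real_normK (num_real (x ord0 i))) ler_sqr ?nnegrE //.
rewrite (_ : `|x| = mx_norm x) // mx_normrE.
by apply/bigmax_geP; right; exists (ord0, i).
Qed.

Lemma compact_enorm_bounded S : compact S ->
  exists M, 0 <= M /\ forall x, S x -> enorm x <= M.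
Proof.
move=> /compact_bounded[M0 [_ normS_le]].
exists (Num.sqrt n%:R * `|M0 + 1|); split=> // x Sx.
apply: le_trans (enorm_le_mx_norm x) _; rewrite ler_wpM2l ?sqrtr_ge0 //.
by apply: le_trans (ler_norm _); apply: normS_le Sx; rewrite ltrDl.
Qed.

Lemma dist_le x S y : S y -> dist x S <= enorm (x - y).
Proof.
move=> Sy; apply: ge_inf; last by exists y.
by exists 0 => _ [z _ <-]; apply: enorm_ge0.
Qed.

Lemma dist_ge x S (a : R) : S !=set0 ->
  (forall y, S y -> a <= enorm (x - y)) -> a <= dist x S.
Proof.
move=> [y0 Sy0] a_le; apply: lb_le_inf; first by exists (enorm (x - y0)), y0.
by move=> _ [y Sy <-]; apply: a_le.
Qed.

Lemma dist_triangle x y S : S !=set0 -> dist x S <= enorm (x - y) + dist y S.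
Proof.
move=> S_neq0; rewrite -lerBlDl; apply: dist_ge => // z Sz.
rewrite lerBlDl; apply: le_trans (dist_le x Sz) _.
by have := enormD (x - y) (y - z); rewrite addrA subrK.
Qed.

Lemma dist_scale (s : R) y F S : 0 < s -> F !=set0 ->
  (forall f, F f -> S (s *: f)) -> dist (s *: y) S <= s * dist y F.
Proof.
move=> s_gt0 F_neq0 sF_sub; rewrite mulrC -ler_pdivrMr //; apply: dist_ge => // f Ff.
rewrite ler_pdivrMr // mulrC; apply: le_trans (dist_le _ (sF_sub _ Ff)) _.
by rewrite -scalerBr enormZ gtr0_norm.
Qed.

End Euclidean.

Section AffineHull.
Variables (R : realType) (n : nat).
Implicit Types (x : 'rV[R]_n) (S : set 'rV[R]_n).

Lemma aff_neq0 S x : aff S x -> S !=set0.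
Proof.
case=> [[|k] [p [a [Sp [sum_a _]]]]]; last by exists (p ord0).
by move: sum_a; rewrite big_ord0 => /esym/eqP; rewrite oner_eq0.
Qed.

Lemma aff_sub0 S x : S `<=` [set 0] -> aff S x -> x = 0.
Proof.
move=> S_sub0 [k [p [a [Sp [_ ->]]]]].
by rewrite big1 // => i _; rewrite (S_sub0 _ (Sp i)) scaler0.
Qed.

Lemma aff_rcons S k (f : 'I_k -> 'rV[R]_n) (b : 'I_k -> R) p (c : R) :
  (forall i, S (f i)) -> S p -> \sum_(i < k) b i + c = 1 ->
  aff S (\sum_(i < k) b i *: f i + c *: p).
Proof.
move=> Sf Sp sum_b.
exists k.+1, (fun i => if unlift ord_max i is Some j then f j else p),
  (fun i => if unlift ord_max i is Some j then b j else c).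
split; first by move=> i; case: unlift.
have unlift_widen (i : 'I_k) : unlift ord_max (widen_ord (leqnSn k) i) = Some i.
  by rewrite (_ : widen_ord _ i = lift ord_max i) ?liftK //; exact/val_inj/esym/lift_max.
rewrite !big_ord_recr /= unlift_none.
by split; [rewrite -sum_b|]; congr (_ + _); apply: eq_bigr => i _; rewrite unlift_widen.
Qed.

Lemma aff_conic_shift (F S : set 'rV[R]_n) (e p : 'rV[R]_n) (mu : R) x :
  (forall g, S g -> exists l f, F f /\ g = l *: f) ->
  (forall f, F f -> dotv e f = 1) -> F p -> aff S x ->
  aff F (mu *: x + (1 - mu * dotv e x) *: p).
Proof.
move=> S_conic F_hyp Fp [k [g [a [Sg [_ ->]]]]].
have /choice[lf lfP] : forall i, exists lf : R * 'rV[R]_n, F lf.2 /\ g i = lf.1 *: lf.2.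
  by move=> i; have [l [f ?]] := S_conic _ (Sg i); exists (l, f).
have g_lf i : a i *: g i = (a i * (lf i).1) *: (lf i).2.
  by case: (lfP i) => _ ->; rewrite scalerA.
rewrite (eq_bigr _ (fun i _ => g_lf i)) scaler_sumr dotv_sumr.
under eq_bigr do rewrite scalerA.
apply: aff_rcons => //; first by move=> i; case: (lfP i).
have dotv_sum : \sum_(i < k) dotv e ((a i * (lf i).1) *: (lf i).2) = \sum_(i < k) a i * (lf i).1.
  by apply: eq_bigr => i _; rewrite dotvZr F_hyp ?mulr1 //; case: (lfP i).
by rewrite dotv_sum -mulr_sumr addrCA subrr addr0.
Qed.

End AffineHull.

Section ConicHull.
Variables (R : realType) (n : nat) (C : set 'rV[R]_n).
Implicit Types (x z : 'rV[R]_n).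

Lemma cone_hullZ (mu : R) z : 0 <= mu -> cone_hull C z -> cone_hull C (mu *: z).
Proof.
move=> mu_ge0 [l [c [l_ge0 [Cc ->]]]].
by exists (mu * l), c; rewrite scalerA mulr_ge0.
Qed.

Lemma sub_cone_hull : C `<=` cone_hull C.
Proof. by move=> c Cc; exists 1, c; rewrite scale1r ler01. Qed.

Lemma cone_hull0 z : cone_hull C z -> cone_hull C 0.
Proof. by rewrite -[0](scale0r z); apply: cone_hullZ. Qed.

Variable G : set 'rV[R]_n.
Hypothesis faceG : is_face (cone_hull C) G.

Lemma face_cone_hull0 g : G g -> G 0.
Proof.
case: faceG => _ [_ [G_sub G_face]] Gg.
have K2g : cone_hull C (2 *: g) by apply: cone_hullZ (G_sub _ Gg).
have [] // := G_face (2 *: g) 0 2^-1 K2g (cone_hull0 K2g).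
- by rewrite invf_lt1 ?ltr1n.
- by rewrite scaler0 addr0 scalerA mulVf ?pnatr_eq0 // scale1r.
Qed.

Lemma face_cone_hullZ (mu : R) z : 0 <= mu -> G z -> G (mu *: z).
Proof.
move=> mu_ge0 Gz; have G0 := face_cone_hull0 Gz.
case: faceG => _ [G_conv [G_sub G_face]].
have [mu_le1|mu_gt1] := lerP mu 1.
  by have := G_conv z 0 mu Gz G0 mu_ge0 mu_le1; rewrite scaler0 addr0.
have mu_gt0 : 0 < mu by apply: lt_trans mu_gt1.
have Kmuz : cone_hull C (mu *: z) by apply: cone_hullZ (G_sub _ Gz).
have [] // := G_face (mu *: z) 0 mu^-1 Kmuz (cone_hull0 Kmuz).
- by rewrite invr_gt0.
- by rewrite invf_lt1.
- by rewrite scaler0 addr0 scalerA mulVf ?gt_eqF // scale1r.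
Qed.

Lemma face_cone_hullE g : G g -> g = 0 \/ exists l f, (G `&` C) f /\ g = l *: f.
Proof.
move=> Gg; case: faceG => _ [_ [G_sub _]].
have [l [c [l_ge0 [Cc gE]]]] := G_sub _ Gg.
have [l0|l_neq0] := eqVneq l 0; first by left; rewrite gE l0 scale0r.
right; exists l, c; split=> //; split=> //.
have -> : c = l^-1 *: g by rewrite gE scalerA mulVf // scale1r.
by apply: face_cone_hullZ; rewrite ?invr_ge0.
Qed.

Lemma face_cone_hullI : closed C -> convexS C -> is_face C (G `&` C).
Proof.
move=> C_closed C_conv; case: faceG => G_closed [G_conv [_ G_face]].
split; first exact: closedI.
split; first by move=> x y t [Gx Cx] [Gy Cy] t0 t1; split; [exact: G_conv | exact: C_conv].
split; first by move=> x [].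
move=> x y a Cx Cy a0 a1 [Gxy _].
by have [] := G_face x y a (sub_cone_hull Cx) (sub_cone_hull Cy) a0 a1 Gxy.
Qed.

End ConicHull.

Section FaceOfConeHull.
Variables (R : realType) (n : nat) (e : 'rV[R]_n) (C G : set 'rV[R]_n) (M kap : R).
Hypothesis C_hyp : C `<=` [set x | dotv e x = 1].
Hypothesis M_ge0 : 0 <= M.
Hypothesis C_le_M : forall c, C c -> enorm c <= M.
Hypothesis faceG : is_face (cone_hull C) G.
Hypothesis kap_ge0 : 0 <= kap.
Hypothesis amenable_GC : forall y, aff (G `&` C) y ->
  enorm y <= 2 * M * (1 + enorm e * M) -> dist y (G `&` C) <= kap * dist y C.

Lemma dist_face_le_scaled x c (s : R) p :
  aff G x -> (G `&` C) p -> C c -> 0 < s ->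
  enorm x <= 2 * s * M -> enorm (x - s *: c) <= enorm x ->
  dist x G <= (enorm e * M + kap * (1 + enorm e * M)) * enorm (x - s *: c).
Proof.
move=> affx GCp Cc s_gt0 x_le d_le.
set d := enorm (x - s *: c) in d_le *; set E := enorm e; set t := dotv e x.
have E_ge0 : 0 <= E := enorm_ge0 e.
have EM_ge0 : 0 <= E * M := mulr_ge0 E_ge0 M_ge0.
set y := s^-1 *: x + (1 - s^-1 * t) *: p.
have affy : aff (G `&` C) y.
  apply: (aff_conic_shift _ _ _ GCp affx) => [g Gg|f [_ Cf]]; last exact: C_hyp.
  by case: (face_cone_hullE faceG Gg) => [->|//]; exists 0, p; rewrite scale0r.
have syE : s *: y = x + (s - t) *: p.
  rewrite scalerDr !scalerA mulfV ?gt_eqF // scale1r mulrBr mulr1 mulrA.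
  by rewrite mulfV ?gt_eqF // mul1r.
have st_le : `|s - t| <= E * d.
  have -> : s - t = dotv e (s *: c - x) by rewrite dotvBr dotvZr C_hyp // mulr1.
  by rewrite /d enorm_distC; apply: dotv_le_enorm.
have sy_x_le : enorm (s *: y - x) <= E * M * d.
  rewrite syE addrAC subrr add0r enormZ mulrAC.
  by apply: ler_pM => //; [exact: enorm_ge0 | apply: C_le_M; case: GCp].
have y_le : enorm y <= 2 * M * (1 + E * M).
  have -> : y = s^-1 *: (s *: y) by rewrite scalerA mulVf ?gt_eqF // scale1r.
  rewrite enormZ ger0_norm ?invr_ge0 ?(ltW s_gt0) // ler_pdivrMl //.
  have := enormD (s *: y - x) x; rewrite subrK.
  have := ler_wpM2l EM_ge0 d_le; have := ler_wpM2r (addr_ge0 ler01 EM_ge0) x_le.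
  lra.
have sy_C_le : s * dist y C <= (E * M + 1) * d.
  apply: le_trans (ler_wpM2l (ltW s_gt0) (dist_le y Cc)) _.
  rewrite -(gtr0_norm s_gt0) -enormZ scalerBr.
  have := enormD (s *: y - x) (x - s *: c); rewrite addrA subrK -/d; lra.
have G_neq0 : G !=set0 by exists p; case: GCp.
have GC_neq0 : (G `&` C) !=set0 by exists p.
have sGC_sub_G f : (G `&` C) f -> G (s *: f).
  by case=> Gf _; exact: (face_cone_hullZ faceG (ltW s_gt0) Gf).
have := dist_triangle x (s *: y) G_neq0.
have := dist_scale y s_gt0 GC_neq0 sGC_sub_G.
have := ler_wpM2l (ltW s_gt0) (amenable_GC affy y_le).
have := ler_wpM2l kap_ge0 sy_C_le.
rewrite enorm_distC; lra.
Qed.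

Let kappa := 2 + enorm e * M + kap * (1 + enorm e * M).

Lemma kappa_ge2 : 2 <= kappa.
Proof.
have EM_ge0 : 0 <= enorm e * M := mulr_ge0 (enorm_ge0 e) M_ge0.
have := mulr_ge0 kap_ge0 (addr_ge0 ler01 EM_ge0); rewrite /kappa; lra.
Qed.

Lemma dist_face_le x k : aff G x -> cone_hull C k -> dist x G <= kappa * enorm (x - k).
Proof.
move=> affx [s [c [s_ge0 [Cc ->]]]].
set d := enorm (x - s *: c).
have d_ge0 : 0 <= d := enorm_ge0 _.
have [g Gg] := aff_neq0 affx.
have dist_le_norm : dist x G <= enorm x.
  by have := dist_le x (face_cone_hull0 faceG Gg); rewrite subr0.
have [x_le|d_lt] := lerP (enorm x) (2 * d).
  have := ler_wpM2r d_ge0 kappa_ge2; lra.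
have x_le : enorm x <= d + s * M.
  have := enormD (x - s *: c) (s *: c); rewrite subrK enormZ ger0_norm // -/d.
  have := ler_wpM2l s_ge0 (C_le_M Cc); lra.
have s_gt0 : 0 < s.
  rewrite lt_neqAle s_ge0 andbT; apply/eqP => s0.
  by move: x_le; rewrite -s0 mul0r addr0; lra.
have [p GCp] : (G `&` C) !=set0.
  apply/set0P/negP => /eqP GC0.
  have x0 : x = 0.
    apply: aff_sub0 affx => z Gz; case: (face_cone_hullE faceG Gz) => // -[l [f [GCf _]]].
    by rewrite GC0 in GCf.
  by move: d_lt; rewrite x0 enorm0; lra.
have d_le : d <= enorm x by lra.
have x_le2 : enorm x <= 2 * s * M by lra.
apply: le_trans (dist_face_le_scaled affx GCp Cc s_gt0 x_le2 d_le) _.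
by apply: ler_wpM2r => //; rewrite /kappa; lra.
Qed.

Lemma dist_face_cone_hull_le x : aff G x -> dist x G <= kappa * dist x (cone_hull C).
Proof.
move=> affx; have [g Gg] := aff_neq0 affx.
have kappa_gt0 : 0 < kappa by apply: lt_le_trans kappa_ge2.
have K_neq0 : cone_hull C !=set0 by exists g; case: faceG => _ [_ [G_sub _]]; apply: G_sub.
rewrite -ler_pdivrMl //; apply: (dist_ge K_neq0) => k Kk.
by rewrite (ler_pdivrMl _ _ kappa_gt0); apply: dist_face_le.
Qed.

End FaceOfConeHull.

Unset Implicit Arguments.

Theorem theorem4p5 (R : realType) (n : nat) (e : 'rV[R]_n) (C : set 'rV[R]_n) :
  e != 0 ->
  compact C -> convexS C ->
  C `<=` [set x | dotv e x = 1] ->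
  amenable C ->
  amenable (cone_hull C).
Proof.
move=> _ C_compact C_conv C_hyp amenableC G faceG B _.
have [M [M_ge0 C_le_M]] := compact_enorm_bounded C_compact.
have C_closed : closed C by apply: compact_closed.
have faceGC := face_cone_hullI faceG C_closed C_conv.
set bound := 2 * M * (1 + enorm e * M).
have [|kap [kap_gt0 amenable_GC]] := amenableC _ faceGC [set y | enorm y <= bound].
  by exists bound.
exists (2 + enorm e * M + kap * (1 + enorm e * M)); split.
  exact: lt_le_trans (kappa_ge2 e M_ge0 (ltW kap_gt0)).
move=> x affx _.
exact: (dist_face_cone_hull_le C_hyp M_ge0 C_le_M faceG (ltW kap_gt0) amenable_GC).
Qed.
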